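(* Consider $\mathrm{USD}_p$ with $p\in[0,1]$ and let $c_s>0$ be an arbitrary constant. Let $\mathbf{x}(t_0)$ be a configuration at time $t_0$ with negative weighted bias $\Delta_{\bar{w}}(t_0) \geq c_s n$. Let $T_1 := \inf\{t \geq t_0 : x_1(t) = 0\}$. Then $\Pr[T_1 - t_0 \leq 20 c_s^{-1} n\log n] \geq 1-n^{-2}$.
   Context: Population protocol with $n$ agents, each in a state from $\{1,2,\bot\}$ (Opinion 1, Opinion 2, undecided). At each time step a scheduler picks an ordered pair $(i,j)$ of agents uniformly at random, independently of the past; only the initiator $i$ changes state. In $\mathrm{USD}_p$: if the initiator is $2$ and the responder $1$, the initiator becomes $\bot$; if the initiator is $1$ and the responder $2$, the initiator becomes $\bot$ with probability $1-p$ and otherwise stays $1$; if the initiator is $\bot$, it adopts the responder's state; otherwise nothing changes. $x_1(t),x_2(t),u(t)$ are the numbers of agents in states $1,2,\bot$ after $t$ interactions. The negative weighted bias is $\Delta_{\bar{w}}(t) := (1-p)x_2(t) - x_1(t)$. *)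

From HB Require Import structures.
From mathcomp Require Import all_boot all_order all_algebra.
From mathcomp Require Import reals exp.
Set Implicit Arguments. Unset Strict Implicit. Unset Printing Implicit Defensive.
Import Order.TTheory GRing.Theory Num.Theory.
Local Open Scope ring_scope.

(* Agent states: [Some true] = opinion 1, [Some false] = opinion 2,
   [None] = undecided (bot). *)
Definition agent_state := option bool.
Definition op1 : agent_state := Some true.
Definition op2 : agent_state := Some false.
Definition und : agent_state := None.

Definition config (n : nat) := {ffun 'I_n -> agent_state}.

Definition x1 n (c : config n) : nat := #|[set i | c i == op1]|.
Definition x2 n (c : config n) : nat := #|[set i | c i == op2]|.
Definition xu n (c : config n) : nat := #|[set i | c i == und]|.

Section USD.
Variable R : realType.

(* USD_p local rule: probability that an initiator in state [a], interacting
   with a responder in state [b], ends in state [s']. *)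
Definition usd_rule (p : R) (a b s' : agent_state) : R :=
  if (a == op2) && (b == op1) then (s' == und)%:R
  else if (a == op1) && (b == op2) then
    (if s' == und then 1 - p else if s' == op1 then p else 0)
  else if a == und then (s' == b)%:R
  else (s' == a)%:R.

(* One-step transition kernel of the configuration chain: the scheduler picks
   an ordered pair (i, j) of distinct agents uniformly at random; only the
   initiator i may change state. *)
Definition usd_kernel (p : R) n (c c' : config n) : R :=
  \sum_(i : 'I_n) \sum_(j : 'I_n | j != i)
     ((n * n.-1)%:R)^-1 * usd_rule p (c i) (c j) (c' i)
       * ([forall k : 'I_n, (k != i) ==> (c' k == c k)])%:R.

Definition path_prob (p : R) n (c0 : config n) K
    (w : {ffun 'I_K.+1 -> config n}) : R :=
  (w ord0 == c0)%:R *
  \prod_(t < K) usd_kernel p (w (inord t)) (w (inord t.+1)).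

(* Pr[ T_1 - t_0 <= K ] where T_1 = inf { t >= t_0 : x_1(t) = 0 } and the
   chain is at configuration c0 at time t_0 (time-homogeneous, so we shift
   t_0 to 0): the probability that x_1 hits 0 during steps 0..K. *)
Definition hit_x1_zero_prob (p : R) n (c0 : config n) (K : nat) : R :=
  \sum_(w : {ffun 'I_K.+1 -> config n} | [exists t : 'I_K.+1, x1 (w t) == 0%N])
     path_prob p c0 w.

End USD.

From mathcomp Require Import all_boot all_order all_algebra.
From mathcomp Require Import reals sequences exp.
From mathcomp Require Import ring lra.
Import Order.TTheory GRing.Theory Num.Theory.
Local Open Scope ring_scope.
Set Implicit Arguments. Unset Strict Implicit. Unset Printing Implicit Defensive.

(* Write [Delta = (1 - p) x2 - x1] for the weighted bias.  While
   [Delta > c_s n / 2], the ratio [x1 / x2] shrinks in expectation by a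
   factor [1 - del] per step, [del = c_s / (4 (n - 1))]; and since [Delta] has
   nonnegative drift and increments of size at most 1, the exponential
   [exp (lam (c_s n / 2 - Delta))] grows in expectation by a factor at most
   [1 + 4 lam^2].  Hence
     [W_t = n (1 - del)^(K - t) x1 / x2
            + (1 + 4 lam^2)^(K - t) exp (lam (c_s n / 2 - Delta))]
   is a supermartingale wherever it is below 1 (which forces
   [Delta > c_s n / 2]), and [W_K >= 1] as long as [x1 > 0].  So the
   probability that [x1] survives [K] steps is at most [W_0], and with
   [K ~ 20 n ln n / c_s] and [lam = c_s n / (16 K)] both terms of [W_0] are at
   most [1 / (2 n^2)]. *)

Section Counting.
Variables (R : realType) (n : nat).
Implicit Types c : config n.

Lemma sum_indicator_mul (T : finType) (x : T) (G : T -> R) :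
  \sum_(y : T) (y == x)%:R * G y = G x.
Proof.
rewrite (bigD1 x) //= eqxx mul1r big1 ?addr0 // => y /negPf ->.
by rewrite mul0r.
Qed.

Lemma sum_agent_state (F : agent_state -> R) :
  \sum_(s : agent_state) F s = F op1 + F op2 + F und.
Proof.
rewrite (bigD1 op1) //= (bigD1 op2) //= (bigD1 und) //= big1 ?addr0 ?addrA //.
by case=> [[]|].
Qed.

Definition nstate c (a : agent_state) : R := \sum_(k : 'I_n) (c k == a)%:R.

Lemma card_stateE c a : (#|[set k | c k == a]|)%:R = nstate c a.
Proof.
rewrite /nstate -sum1_card natr_sum big_mkcond /=.
by apply: eq_bigr => k _; rewrite inE; case: (c k == a).
Qed.

Lemma sum_by_state c (h : agent_state -> R) :
  \sum_(i : 'I_n) h (c i) =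
  (x1 c)%:R * h op1 + (x2 c)%:R * h op2 + (xu c)%:R * h und.
Proof.
rewrite /x1 /x2 /xu !card_stateE /nstate.
transitivity (\sum_(i : 'I_n) \sum_(a : agent_state) (c i == a)%:R * h a).
  by apply: eq_bigr => i _; under eq_bigr do rewrite eq_sym; rewrite sum_indicator_mul.
by rewrite exchange_big /= sum_agent_state !mulr_suml.
Qed.

Lemma x1_x2_xu_sum c : (x1 c)%:R + (x2 c)%:R + (xu c)%:R = n%:R :> R.
Proof.
have := sum_by_state c (fun _ => 1); rewrite !mulr1 => <-.
by rewrite sumr_const card_ord.
Qed.

Definition set_agent c (i : 'I_n) (s : agent_state) : config n :=
  [ffun k => if k == i then s else c k].

Lemma nstate_set_agent c i s a :
  nstate (set_agent c i s) a = nstate c a - (c i == a)%:R + (s == a)%:R.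
Proof.
rewrite /nstate (bigD1 i) //= [in RHS](bigD1 i) //= ffunE eqxx.
have -> : \sum_(k < n | k != i) ((set_agent c i s) k == a)%:R =
          \sum_(k < n | k != i) (c k == a)%:R :> R.
  by apply: eq_bigr => k /negPf ki; rewrite ffunE ki.
ring.
Qed.

Definition dx1 (a s : agent_state) : R :=
  match a, s with
  | Some true, Some true => 0
  | Some true, _ => -1
  | _, Some true => 1
  | _, _ => 0
  end.

Definition dx2 (a s : agent_state) : R :=
  match a, s with
  | Some false, Some false => 0
  | Some false, _ => -1
  | _, Some false => 1
  | _, _ => 0
  end.

Lemma x1_set_agent c i s : (x1 (set_agent c i s))%:R = (x1 c)%:R + dx1 (c i) s :> R.
Proof.
rewrite /x1 !card_stateE nstate_set_agent.
by case: (c i) => [[]|]; case: s => [[]|] /=; rewrite ?subr0 ?addr0 ?subrK ?add0r.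
Qed.

Lemma x2_set_agent c i s : (x2 (set_agent c i s))%:R = (x2 c)%:R + dx2 (c i) s :> R.
Proof.
rewrite /x2 !card_stateE nstate_set_agent.
by case: (c i) => [[]|]; case: s => [[]|] /=; rewrite ?subr0 ?addr0 ?subrK ?add0r.
Qed.

Lemma set_agentP c i s (c' : config n) :
  (c' == set_agent c i s) = (s == c' i) && [forall k, (k != i) ==> (c' k == c k)].
Proof.
apply/idP/idP.
  move/eqP->; rewrite ffunE !eqxx /=; apply/forallP => k; apply/implyP.
  by move/negPf; rewrite ffunE => ->.
case/andP => /eqP -> /forallP H; apply/eqP/ffunP => k; rewrite ffunE.
by case: eqP => [->|/eqP ki] //; exact/eqP/(implyP (H k) ki).
Qed.

Lemma sum_agree_off c i (g : agent_state -> config n -> R) :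
  \sum_(c' : config n) ([forall k, (k != i) ==> (c' k == c k)])%:R * g (c' i) c'
  = \sum_(s : agent_state) g s (set_agent c i s).
Proof.
transitivity (\sum_(s : agent_state) \sum_(c' : config n)
                 (c' == set_agent c i s)%:R * g s c');
  last by apply: eq_bigr => s _; rewrite sum_indicator_mul.
rewrite exchange_big /=; apply: eq_bigr => c' _; symmetry.
transitivity (\sum_(s : agent_state) (s == c' i)%:R *
   (([forall k, (k != i) ==> (c' k == c k)])%:R * g s c'));
  last by rewrite sum_indicator_mul.
apply: eq_bigr => s _; rewrite set_agentP.
by case: (s == c' i); case: [forall k, _]; rewrite /= ?mul0r ?mul1r.
Qed.

End Counting.

Section OneStep.
Variables (R : realType) (p : R) (n : nat).
Implicit Types c : config n.

Lemma usd_kernel_sum c (f : config n -> R) :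
  \sum_(c' : config n) usd_kernel p c c' * f c' =
  ((n * n.-1)%:R)^-1 * \sum_(i : 'I_n) \sum_(j : 'I_n | j != i)
      \sum_(s : agent_state) usd_rule p (c i) (c j) s * f (set_agent c i s).
Proof.
rewrite /usd_kernel.
under eq_bigr do rewrite mulr_suml.
rewrite exchange_big mulr_sumr /=; apply: eq_bigr => i _.
under eq_bigr do rewrite mulr_suml.
rewrite exchange_big mulr_sumr /=; apply: eq_bigr => j _.
rewrite mulr_sumr.
pose g s c' := ((n * n.-1)%:R)^-1 * usd_rule p (c i) (c j) s * f c'.
transitivity (\sum_(s : agent_state) g s (set_agent c i s));
  last by apply: eq_bigr => s _; rewrite /g mulrA.
by rewrite -sum_agree_off; apply: eq_bigr => c' _; rewrite /g; ring.
Qed.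

Lemma sum_offdiag (H : agent_state -> agent_state -> R) c :
  \sum_(i : 'I_n) \sum_(j : 'I_n | j != i) H (c i) (c j) =
  \sum_(i : 'I_n) \sum_(j : 'I_n) H (c i) (c j) - \sum_(i : 'I_n) H (c i) (c i).
Proof.
rewrite -sumrB; apply: eq_bigr => i _.
by rewrite [X in _ = X - _](bigD1 i) //= addrAC subrr add0r.
Qed.

(* Of the [S (S - 1)] ordered pairs, [x1 x2] turn a 2 into bot, [x1 x2]
   turn a 1 into bot with probability [1 - p], and [u x1], [u x2] turn a bot
   into a 1, resp. a 2; all other pairs change nothing. *)
Definition step_mean (F : R -> R -> R) (X1 X2 U : R) : R :=
  F X1 X2 + ((X1 + X2 + U) * (X1 + X2 + U - 1))^-1 *
   (X1 * X2 * (F X1 (X2 - 1) - F X1 X2)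
    + (1 - p) * X1 * X2 * (F (X1 - 1) X2 - F X1 X2)
    + U * X1 * (F (X1 + 1) X2 - F X1 X2)
    + U * X2 * (F X1 (X2 + 1) - F X1 X2)).

Lemma step_mean_comb (A B : R) (F G : R -> R -> R) X1 X2 U :
  step_mean (fun a b => A * F a b + B * G a b) X1 X2 U =
  A * step_mean F X1 X2 U + B * step_mean G X1 X2 U.
Proof. by rewrite /step_mean; ring. Qed.

Lemma usd_kernel_mean c (F : R -> R -> R) : (1 < n)%N ->
  \sum_(c' : config n) usd_kernel p c c' * F (x1 c')%:R (x2 c')%:R =
  step_mean F (x1 c)%:R (x2 c)%:R (xu c)%:R.
Proof.
move=> n_gt1; rewrite usd_kernel_sum.
set X1 : R := (x1 c)%:R; set X2 : R := (x2 c)%:R; set U : R := (xu c)%:R.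
pose G (a b : agent_state) := \sum_(s : agent_state)
  usd_rule p a b s * F (X1 + @dx1 R a s) (X2 + @dx2 R a s).
transitivity (((n * n.-1)%:R)^-1 *
    \sum_(i : 'I_n) \sum_(j : 'I_n | j != i) G (c i) (c j)).
  congr (_ * _); apply: eq_bigr => i _; apply: eq_bigr => j _.
  by apply: eq_bigr => s _; rewrite x1_set_agent x2_set_agent.
rewrite (sum_offdiag G c).
under eq_bigr do rewrite (sum_by_state c (G _)).
rewrite !(sum_by_state c (fun a => G a a)).
rewrite (sum_by_state c (fun a => X1 * G a op1 + X2 * G a op2 + U * G a und)).
rewrite /G !sum_agent_state /usd_rule /= ?addr0.
have hn : n%:R = X1 + X2 + U by rewrite x1_x2_xu_sum.
have -> : (n * n.-1)%:R = (X1 + X2 + U) * (X1 + X2 + U - 1) :> R.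
  by rewrite natrM -subn1 natrB ?hn // ltnW.
have hN : (X1 + X2 + U) * (X1 + X2 + U - 1) != 0.
  rewrite -hn mulf_eq0 negb_or pnatr_eq0 -(natrB _ (ltnW n_gt1)) pnatr_eq0 subn1.
  by case: n n_gt1 => [|[|m]].
by rewrite /step_mean; field; move: hN; rewrite mulf_eq0 negb_or andbC.
Qed.

End OneStep.

Section Paths.
Variables (R : realType) (p : R) (n : nat).
Implicit Types c : config n.

Definition stay_prob (g : pred (config n)) K c0 : R :=
  \sum_(w : {ffun 'I_K.+1 -> config n} | [forall t, g (w t)]) path_prob p c0 w.

Lemma stay_prob0 g c0 : stay_prob g 0 c0 = (g c0)%:R.
Proof.
rewrite /stay_prob big_mkcond /=.
transitivity (\sum_(w : {ffun 'I_1 -> config n})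
                ((w == [ffun=> c0])%:R * (g c0)%:R : R));
  last by rewrite sum_indicator_mul.
apply: eq_bigr => w _; rewrite /path_prob big_ord0 mulr1.
have -> : (w == [ffun=> c0]) = (w ord0 == c0).
  apply/eqP/eqP => [->|h]; first by rewrite ffunE.
  by apply/ffunP => t; rewrite ffunE ord1 h.
have -> : [forall t, g (w t)] = g (w ord0).
  by apply/forallP/idP => [H|H t]; [exact: H | rewrite ord1].
by case: eqP => [->|_]; case: (g _); rewrite ?mul0r ?mul1r.
Qed.

Definition path_cons K c0 (w : {ffun 'I_K.+1 -> config n}) :
    {ffun 'I_K.+2 -> config n} :=
  [ffun t : 'I_K.+2 => if nat_of_ord t is k.+1 then w (inord k) else c0].

Definition path_behead K (w : {ffun 'I_K.+2 -> config n}) :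
    {ffun 'I_K.+1 -> config n} :=
  [ffun t : 'I_K.+1 => w (inord t.+1)].

Lemma path_consS K c0 w k :
  (k < K.+1)%N -> @path_cons K c0 w (inord k.+1) = w (inord k).
Proof. by move=> hk; rewrite ffunE inordK. Qed.

Lemma path_cons0 K c0 w : @path_cons K c0 w (inord 0) = c0.
Proof. by rewrite ffunE inordK. Qed.

Lemma path_consK K c0 : cancel (@path_cons K c0) (@path_behead K).
Proof. by move=> w; apply/ffunP => t; rewrite ffunE path_consS // inord_val. Qed.

Lemma path_beheadK K c0 (w : {ffun 'I_K.+2 -> config n}) :
  w ord0 = c0 -> path_cons c0 (path_behead w) = w.
Proof.
move=> h; apply/ffunP => -[[|k] hk]; rewrite ffunE /=.
  by rewrite -h; congr (w _); apply: val_inj.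
by rewrite ffunE inordK //; congr (w _); apply: val_inj; rewrite /= inordK.
Qed.

Lemma path_cons_prod K c0 (w : {ffun 'I_K.+1 -> config n}) :
  \prod_(t < K.+1) usd_kernel p (path_cons c0 w (inord t)) (path_cons c0 w (inord t.+1))
  = usd_kernel p c0 (w ord0) *
    \prod_(t < K) usd_kernel p (w (inord t)) (w (inord t.+1)).
Proof.
rewrite big_ord_recl path_cons0 /= path_consS //.
have -> : (inord 0 : 'I_K.+1) = ord0 by apply: val_inj; rewrite /= inordK.
congr (_ * _); apply: eq_bigr => i _.
by rewrite /bump leq0n add1n path_consS ?path_consS // ?ltnS ?ltn_ord // ltnW.
Qed.

Lemma stay_probS g K c0 :
  stay_prob g K.+1 c0 =
  (g c0)%:R * \sum_(c' : config n) usd_kernel p c0 c' * stay_prob g K c'.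
Proof.
rewrite /stay_prob /path_prob.
rewrite (bigID (fun w : {ffun 'I_K.+2 -> config n} => w ord0 == c0)) /=.
rewrite [X in _ + X]big1 ?addr0; last by move=> w /andP [_ /negPf ->]; rewrite mul0r.
under eq_bigr => w /andP [_ /eqP ->] do rewrite eqxx mul1r.
rewrite (reindex_onto (@path_cons K c0) (@path_behead K)); last first.
  by move=> w /andP [_ /eqP]; apply: path_beheadK.
have cond (w' : {ffun 'I_K.+1 -> config n}) : ([forall t, g (path_cons c0 w' t)] && (path_cons c0 w' ord0 == c0))
               && (path_behead (path_cons c0 w') == w')
             = g c0 && [forall t, g (w' t)].
  rewrite path_consK eqxx andbT ffunE eqxx andbT.
  apply/forallP/andP => [H|[H1 H2] t].
    split; first by have := H ord0; rewrite ffunE.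
    by apply/forallP => t; have := H (inord t.+1); rewrite path_consS // inord_val.
  by rewrite ffunE; case: t => [[|k] hk] //=; exact: (forallP H2).
rewrite (eq_bigl _ _ cond) (eq_bigr _ (fun w' _ => path_cons_prod c0 w')).
case: (g c0) => /=; last by rewrite mul0r big_pred0.
rewrite mul1r; under [RHS]eq_bigr do rewrite mulr_sumr.
rewrite [RHS]exchange_big /=; apply: eq_bigr => w _.
transitivity (\sum_(c' : config n) (c' == w ord0)%:R *
   (usd_kernel p c0 c' * \prod_(t < K) usd_kernel p (w (inord t)) (w (inord t.+1))));
  first by rewrite sum_indicator_mul.
by apply: eq_bigr => c' _; rewrite eq_sym; ring.
Qed.

Hypotheses (p_ge0 : 0 <= p) (p_le1 : p <= 1).
Hypothesis n_gt1 : (1 < n)%N.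

Lemma usd_rule_ge0 a b s : 0 <= usd_rule p a b s.
Proof.
by rewrite /usd_rule; repeat case: ifP => _ //; rewrite ?subr_ge0.
Qed.

Lemma usd_kernel_ge0 c c' : 0 <= usd_kernel p c c'.
Proof.
apply: sumr_ge0 => i _; apply: sumr_ge0 => j _.
by rewrite !mulr_ge0 // ?invr_ge0 // usd_rule_ge0.
Qed.

Lemma usd_kernel_sum1 c : \sum_(c' : config n) usd_kernel p c c' = 1.
Proof.
have := usd_kernel_mean p c (fun _ _ => (1 : R)) n_gt1.
rewrite /step_mean !subrr !mulr0 !addr0 mulr0 addr0 => <-.
by apply: eq_bigr => c' _; rewrite mulr1.
Qed.

Lemma stay_probT K c : stay_prob predT K c = 1.
Proof.
elim: K c => [|K IH] c; first by rewrite stay_prob0.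
rewrite stay_probS mul1r -(usd_kernel_sum1 c); apply: eq_bigr => c' _.
by rewrite IH mulr1.
Qed.

Lemma hit_x1_zero_probE K c0 :
  hit_x1_zero_prob p c0 K = 1 - stay_prob (fun c => x1 c != 0%N) K c0.
Proof.
rewrite -(stay_probT K c0) /stay_prob /hit_x1_zero_prob.
rewrite [X in X - _](bigID (fun w : {ffun 'I_K.+1 -> config n} =>
                              [exists t, x1 (w t) == 0%N])) /=.
have sel_hit (w : {ffun 'I_K.+1 -> config n}) :
    [forall t, predT (w t)] && [exists t, x1 (w t) == 0%N] =
    [exists t, x1 (w t) == 0%N].
  by apply/andP/idP => [[]//|H]; split=> //; apply/forallP.
have sel_stay (w : {ffun 'I_K.+1 -> config n}) :
    [forall t, predT (w t)] && ~~ [exists t, x1 (w t) == 0%N] =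
    [forall t, x1 (w t) != 0%N].
  by rewrite negb_exists; apply/andP/idP => [[]//|H]; split=> //; apply/forallP.
by rewrite (eq_bigl _ _ sel_hit) (eq_bigl _ _ sel_stay) addrK.
Qed.

(* A supermartingale needs to be checked only where it is below 1, because
   probabilities are compared with [min 1 U]. *)
Lemma stay_prob_le_supermartingale (g : pred (config n))
    (U : nat -> config n -> R) K :
  (forall t c, 0 <= U t c) ->
  (forall c, g c -> 1 <= U K c) ->
  (forall t c, (t < K)%N -> g c -> U t c < 1 ->
      \sum_(c' : config n) usd_kernel p c c' * U t.+1 c' <= U t c) ->
  forall m c, (m <= K)%N -> stay_prob g m c <= U (K - m)%N c.
Proof.
move=> U_ge0 U_final U_step m c hm.
suff : stay_prob g m c <= Num.min 1 (U (K - m)%N c) by rewrite le_min => /andP[].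
elim: m c hm => [|m IH] c hm.
  rewrite stay_prob0 subn0; case: (boolP (g c)) => gc; last by rewrite le_min ler01 U_ge0.
  by rewrite le_min lexx U_final.
rewrite stay_probS; case: (boolP (g c)) => gc; last by rewrite mul0r le_min ler01 U_ge0.
rewrite mul1r.
have hK : (K - m.+1 < K)%N by rewrite ltn_subrL (leq_trans _ hm).
have le_min_sum : \sum_(c' : config n) usd_kernel p c c' * stay_prob g m c' <=
    \sum_(c' : config n) usd_kernel p c c' * Num.min 1 (U (K - m)%N c').
  apply: ler_sum => c' _; apply: ler_wpM2l; first exact: usd_kernel_ge0.
  exact/IH/ltnW.
have le1 : \sum_(c' : config n) usd_kernel p c c' * stay_prob g m c' <= 1.
  apply: (le_trans le_min_sum); rewrite -[leRHS](usd_kernel_sum1 c).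
  apply: ler_sum => c' _; rewrite -[leRHS]mulr1.
  by apply: ler_wpM2l; [exact: usd_kernel_ge0 | rewrite ge_min lexx].
rewrite le_min le1 /=; case: (ltrP (U (K - m.+1)%N c) 1) => hU; last exact: le_trans hU.
apply: (le_trans le_min_sum); apply: le_trans (U_step _ _ hK gc hU).
rewrite subnSK //; apply: ler_sum => c' _.
by apply: ler_wpM2l; [exact: usd_kernel_ge0 | rewrite ge_min lexx orbT].
Qed.

End Paths.

Section RealFacts.
Variable R : realType.

Lemma expR_le_quad (y : R) : y <= 1/2 -> expR y <= 1 + y + 2 * y ^+ 2.
Proof.
move=> hy.
have y_lt1 : 0 < 1 - y by lra.
have expRN_ge : 1 - y <= expR (- y) by have := expR_ge1Dx (- y).
rewrite -[y]opprK expRN opprK.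
apply: (@le_trans _ _ ((1 - y)^-1)); first by rewrite lef_pV2 ?posrE ?expR_gt0.
rewrite -div1r ler_pdivrMr //.
have : 0 <= y ^+ 2 * (1 - 2 * y) by apply: mulr_ge0; [exact: sqr_ge0 | lra].
nra.
Qed.

Lemma expR1_le4 : expR 1 <= 4 :> R.
Proof.
have expR_half_le := @expR_le_quad (1/2) ltac:(lra).
have -> : (1 : R) = 1/2 + 1/2 by field.
rewrite expRD; have := expR_ge0 (1/2 : R); nra.
Qed.

Lemma ln_ge1 (x : R) : 4 <= x -> 1 <= ln x.
Proof.
move=> hx; rewrite -ler_expR lnK ?posrE; last by lra.
exact: le_trans expR1_le4 hx.
Qed.

Lemma expr1D_le_expR (a : R) (K : nat) : 0 <= 1 + a -> (1 + a) ^+ K <= expR (a * K%:R).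
Proof.
move=> h; rewrite expRM_natr; apply: lerXn2r; rewrite ?nnegrE ?expR_ge0 //.
exact: expR_ge1Dx.
Qed.

(* From [ln x <= 4 x^(1/4)], i.e. [ln x ^ 2 <= 16 sqrt x]. *)
Lemma ln_sqr_le (x b : R) : 0 < b -> 1 <= x -> (60 * 1024 / b) ^+ 2 <= x ->
  (60 * 64) * ln x ^+ 2 <= b * x.
Proof.
move=> b0 x1 hx.
have x0 : 0 < x by lra.
set s := Num.sqrt x; set y := Num.sqrt s.
have s0 : 0 < s by rewrite sqrtr_gt0.
have y0 : 0 < y by rewrite sqrtr_gt0.
have ss : s ^+ 2 = x by rewrite sqr_sqrtr // ltW.
have yy : y ^+ 2 = s by rewrite sqr_sqrtr // ltW.
have lnE : ln x = ln y *+ 4 by rewrite -ss -yy -exprM lnXn.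
have ly : ln y < y by apply: ln_sublinear.
have L0 : 0 <= ln x by apply: ln_ge0.
have L1 : ln x <= 4 * y by rewrite lnE mulr_natl; lra.
have L2 : ln x ^+ 2 <= 16 * s.
  rewrite -yy; have -> : 16 * y ^+ 2 = (4 * y) ^+ 2 by ring.
  by apply: lerXn2r; rewrite ?nnegrE //; lra.
have sb : 60 * 1024 <= b * s.
  rewrite -ler_pdivrMl // mulrC.
  have h := ler_wsqrtr hx; rewrite sqrtr_sqr ger0_norm in h => //.
  by rewrite divr_ge0 ?(ltW b0) //; lra.
have -> : b * x = (b * s) * s by rewrite -ss; ring.
nra.
Qed.

End RealFacts.

Section DriftBounds.
Variables (R : realType) (p : R).

Definition opinion_ratio (X1 X2 : R) : R := X1 / X2.

(* The drift of [x1 / x2] is [x1 / x2 * (x1 / (x2 - 1) + u / (x2 + 1) - Delta)]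
   over the number of ordered pairs; once [x2 - 1 >= 4 / cs] the first two terms
   are at most [cs n / 4]. *)
Lemma step_mean_ratio_le (cs X1 X2 U : R) :
  0 <= p -> 0 < cs -> 0 <= X1 -> 0 <= X2 -> 0 <= U ->
  cs * (X1 + X2 + U) / 2 < (1 - p) * X2 - X1 ->
  4 / cs <= cs * (X1 + X2 + U) / 2 - 1 ->
  step_mean p opinion_ratio X1 X2 U <= (1 - cs / (4 * (X1 + X2 + U - 1))) * opinion_ratio X1 X2.
Proof.
move=> p0 cs0 X10 X20 U0 hD hn.
set S := X1 + X2 + U in hD hn *.
have hcs : 0 < 4 / cs by rewrite divr_gt0.
have X2big : cs * S / 2 < X2 by nra.
have a0 : 4 / cs <= X2 - 1 by lra.
have S1 : 0 < S - 1 by rewrite /S; lra.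
have key : X1 / (X2 - 1) + U / (X2 + 1) <= cs * S / 4.
  have e1 : U / (X2 + 1) <= U / (X2 - 1).
    by apply: ler_wpM2l => //; rewrite lef_pV2 ?posrE; lra.
  apply: (le_trans (lerD (lexx _) e1)).
  rewrite -mulrDl ler_pdivrMr; last by lra.
  have h4 : 4 <= cs * (X2 - 1) by move: a0; rewrite ler_pdivrMr // mulrC.
  have : 0 <= S * (cs * (X2 - 1) - 4) by apply: mulr_ge0; lra.
  rewrite /S; nra.
rewrite /step_mean /opinion_ratio.
set B := (X1 * X2 * (X1 / (X2 - 1) - X1 / X2)
  + (1 - p) * X1 * X2 * ((X1 - 1) / X2 - X1 / X2)
  + U * X1 * ((X1 + 1) / X2 - X1 / X2) + U * X2 * (X1 / (X2 + 1) - X1 / X2)).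
have -> : B = X1 / X2 * (- ((1 - p) * X2 - X1) + X1 / (X2 - 1) + U / (X2 + 1)).
  by rewrite /B; field; apply/and3P; split; apply/eqP; lra.
have SS0 : 0 < S * (S - 1) by rewrite mulr_gt0 //; lra.
apply: (@le_trans _ _ (X1 / X2 + (S * (S - 1))^-1 * (X1 / X2 * - (cs * S / 4)))).
  rewrite lerD2l; apply: ler_wpM2l; first by rewrite invr_ge0 ltW.
  by apply: ler_wpM2l; [rewrite divr_ge0 | lra].
by rewrite le_eqVlt; apply/predU1P; left; field; apply/and3P; split; apply/eqP; lra.
Qed.

Definition bias_potential (a lam X1 X2 : R) : R :=
  expR (lam * (a - ((1 - p) * X2 - X1))).

Lemma bias_potential_ge0 a lam X1 X2 : 0 <= bias_potential a lam X1 X2.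
Proof. exact: expR_ge0. Qed.

Lemma bias_potential_ge1 a lam X1 X2 :
  0 <= lam -> (1 - p) * X2 - X1 <= a -> 1 <= bias_potential a lam X1 X2.
Proof.
move=> lam0 hD; rewrite /bias_potential; set y := lam * _.
have : 0 <= y by apply: mulr_ge0; lra.
have := expR_ge1Dx y; lra.
Qed.

(* With [Delta = q x2 - x1], the four moves change [Delta] by [-q], [+1],
   [-1], [+q]; to first order in [lam] they contribute [lam u Delta >= 0],
   and the second-order terms are at most [2 lam^2 S^2 <= 4 lam^2 S (S - 1)]. *)
Lemma exp_bias_increments_le (q lam X1 X2 U : R) :
  0 <= q <= 1 -> 0 <= lam <= 1/2 -> 0 <= X1 -> 0 <= X2 -> 0 <= U ->
  2 <= X1 + X2 + U -> 0 <= q * X2 - X1 ->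
  X1 * X2 * (expR (lam * q) - 1) + q * X1 * X2 * (expR (- lam) - 1)
  + U * X1 * (expR lam - 1) + U * X2 * (expR (- (lam * q)) - 1)
  <= 4 * lam ^+ 2 * ((X1 + X2 + U) * (X1 + X2 + U - 1)).
Proof.
move=> /andP [q0 q1] /andP [l0 l1] X10 X20 U0 S2 D0.
set S := X1 + X2 + U in S2 *.
have e_lq := @expR_le_quad _ (lam * q) ltac:(nra).
have e_nl := @expR_le_quad _ (- lam) ltac:(lra).
have e_l := @expR_le_quad _ lam ltac:(lra).
have e_nlq := @expR_le_quad _ (- (lam * q)) ltac:(nra).
have X12_ge0 : 0 <= X1 * X2 by apply: mulr_ge0.
have qX12_ge0 : 0 <= q * X1 * X2 by rewrite -mulrA; apply: mulr_ge0.
have UX1_ge0 : 0 <= U * X1 by apply: mulr_ge0.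
have UX2_ge0 : 0 <= U * X2 by apply: mulr_ge0.
apply: (@le_trans _ _ (X1 * X2 * (lam * q + 2 * (lam * q) ^+ 2)
             + q * X1 * X2 * (- lam + 2 * (- lam) ^+ 2)
             + U * X1 * (lam + 2 * lam ^+ 2)
             + U * X2 * (- (lam * q) + 2 * (- (lam * q)) ^+ 2))).
  by repeat apply: lerD; apply: ler_wpM2l => //; lra.
have hQ : X1 * X2 * q ^+ 2 + q * X1 * X2 + U * X1 + U * X2 * q ^+ 2 <= S * S.
  have qq : q ^+ 2 <= 1 by rewrite -(expr1n _ 2); apply: lerXn2r; rewrite ?nnegrE.
  have : X1 * X2 * q ^+ 2 <= X1 * X2 by rewrite -[leRHS]mulr1; apply: ler_wpM2l.
  have : U * X2 * q ^+ 2 <= U * X2 by rewrite -[leRHS]mulr1; apply: ler_wpM2l.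
  have : q * X1 * X2 <= X1 * X2 by rewrite -mulrA -[leRHS]mul1r; apply: ler_wpM2r.
  rewrite /S; nra.
have hUD : 0 <= lam * (U * (q * X2 - X1)) by rewrite !mulr_ge0.
have hl2 : 0 <= lam ^+ 2 by apply: sqr_ge0.
have : 2 * lam ^+ 2 * (X1 * X2 * q ^+ 2 + q * X1 * X2 + U * X1 + U * X2 * q ^+ 2)
       <= 2 * lam ^+ 2 * (S * S) by apply: ler_wpM2l => //; nra.
have : 2 * lam ^+ 2 * (S * S) <= 2 * lam ^+ 2 * (2 * (S * (S - 1))).
  by apply: ler_wpM2l => //; nra.
move: hUD; nra.
Qed.

Lemma step_mean_bias_potential_le (a lam X1 X2 U : R) :
  0 <= p -> p <= 1 -> 0 <= lam <= 1/2 -> 0 <= X1 -> 0 <= X2 -> 0 <= U ->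
  2 <= X1 + X2 + U -> 0 <= (1 - p) * X2 - X1 ->
  step_mean p (bias_potential a lam) X1 X2 U <=
  (1 + 4 * lam ^+ 2) * bias_potential a lam X1 X2.
Proof.
move=> p0 p1 hlam X10 X20 U0 S2 D0.
have hq : 0 <= 1 - p <= 1 by apply/andP; split; lra.
have := exp_bias_increments_le hq hlam X10 X20 U0 S2 D0.
set S := X1 + X2 + U in S2 *; set q := 1 - p.
set P0 := bias_potential a lam X1 X2 => hT.
have P0pos : 0 < P0 by rewrite /P0 /bias_potential expR_gt0.
have shift (d1 d2 : R) X1' X2' : X1' = X1 + d1 -> X2' = X2 + d2 ->
    bias_potential a lam X1' X2' = P0 * expR (lam * (d1 - q * d2)).
  move=> -> ->; rewrite /P0 /bias_potential -expRD.
  by congr expR; rewrite /q; ring.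
rewrite /step_mean -/S -/P0.
rewrite (@shift 0 (-1)) ?addr0 // (@shift (-1) 0) ?addr0 //.
rewrite (@shift 1 0) ?addr0 // (@shift 0 1) ?addr0 //.
rewrite -/q !(mulr0, subr0, sub0r, mulrN1, mulr1, opprK, mulrN).
have SS0 : 0 < S * (S - 1) by apply: mulr_gt0; lra.
apply: (@le_trans _ _ (P0 + (S * (S - 1))^-1 * (P0 * (4 * lam ^+ 2 * (S * (S - 1)))))).
  rewrite lerD2l; apply: ler_wpM2l; first by rewrite invr_ge0 ltW.
  by apply: le_trans (ler_wpM2l (ltW P0pos) hT); rewrite le_eqVlt; apply/predU1P; left; ring.
by rewrite le_eqVlt; apply/predU1P; left; field; apply/andP; split; apply/eqP; lra.
Qed.

End DriftBounds.

Arguments opinion_ratio {R}.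

Definition size_threshold (R : realType) (cs : R) : R :=
  8 + 2 / cs * (1 + 4 / cs) + (60 * 1024 / cs ^+ 3) ^+ 2.

Lemma size_threshold_ge (R : realType) (cs : R) : 0 < cs ->
  [/\ 8 <= size_threshold cs, 2 / cs * (1 + 4 / cs) <= size_threshold cs
    & (60 * 1024 / cs ^+ 3) ^+ 2 <= size_threshold cs].
Proof.
move=> cs0; have c0 : 0 <= 4 / cs by rewrite divr_ge0 // ltW.
have a0 : 0 <= 2 / cs * (1 + 4 / cs) by rewrite mulr_ge0 ?divr_ge0 ?ltW //; lra.
by have := sqr_ge0 (60 * 1024 / cs ^+ 3); rewrite /size_threshold; split; lra.
Qed.

Section HittingTime.
Variables (R : realType) (p cs : R) (n K : nat).
Hypotheses (p_ge0 : 0 <= p) (p_le1 : p <= 1) (cs_gt0 : 0 < cs) (cs_le1 : cs <= 1).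
Hypothesis n_large : size_threshold cs <= n%:R.
Hypothesis hK : K%:R <= 20 / cs * n%:R * ln (n%:R : R) < K.+1%:R.

Local Notation nR := (n%:R : R).
Local Notation KR := (K%:R : R).
Local Notation x1R c := ((x1 c)%:R : R).
Local Notation x2R c := ((x2 c)%:R : R).
Local Notation xuR c := ((xu c)%:R : R).

Lemma n_ge8 : 8 <= nR.
Proof. by case: (size_threshold_ge cs_gt0) => h _ _; exact: le_trans h n_large. Qed.

Lemma n_gt1 : (1 < n)%N.
Proof. by rewrite -(ltr_nat R); have := n_ge8; lra. Qed.

Lemma ratio_drift_margin : 4 / cs <= cs * nR / 2 - 1.
Proof.
have : 2 / cs * (1 + 4 / cs) <= nR.
  by case: (size_threshold_ge cs_gt0) => _ h _; exact: le_trans h n_large.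
have -> : cs * nR / 2 - 1 = 4 / cs + cs / 2 * (nR - 2 / cs * (1 + 4 / cs)).
  by field; rewrite gt_eqF.
by move=> h; rewrite lerDl mulr_ge0 ?divr_ge0 ?(ltW cs_gt0) //; lra.
Qed.

Lemma K_le : KR * cs <= 20 * nR * ln nR.
Proof.
case/andP: hK => + _; rewrite -ler_pdivlMr //.
by have -> : 20 / cs * nR * ln nR = 20 * nR * ln nR / cs by field; rewrite gt_eqF.
Qed.

Lemma K_gt : 20 * nR * ln nR < (KR + 1) * cs.
Proof.
case/andP: hK => _; rewrite natr1 -ltr_pdivrMr //.
by have -> : 20 / cs * nR * ln nR = 20 * nR * ln nR / cs by field; rewrite gt_eqF.
Qed.

Lemma K_ge : 19 * nR <= KR.
Proof.
have K0 : 0 <= KR := ler0n _ K.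
have Kcs_le : (KR + 1) * cs <= KR + 1.
  by rewrite -[leRHS]mulr1; apply: ler_wpM2l => //; lra.
have n_le_nlnn : 20 * nR <= 20 * nR * ln nR.
  by have := ln_ge1 (le_trans (ler_nat R 4 8) n_ge8); have := n_ge8; nra.
by have := K_gt; have := n_ge8; lra.
Qed.

Definition lam : R := cs * nR / (16 * KR).
Definition del : R := cs / (4 * (nR - 1)).

Lemma lam_bounds : 0 <= lam <= 1/2.
Proof.
have := K_ge; have := n_ge8 => n8 hK19.
have K0 : 0 < 16 * KR by lra.
have csn : cs * nR <= nR by rewrite -[leRHS]mul1r ler_wpM2r //; lra.
apply/andP; split; first by rewrite /lam divr_ge0 ?mulr_ge0 ?(ltW cs_gt0) //; lra.
by rewrite /lam ler_pdivrMr //; lra.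
Qed.

Lemma del_bounds : cs / (4 * nR) <= del <= 1.
Proof.
have := n_ge8 => n8; apply/andP; split; rewrite /del.
  by apply: ler_wpM2l; [exact: ltW | rewrite lef_pV2 ?posrE; lra].
by rewrite ler_pdivrMr; have := cs_le1; lra.
Qed.

Lemma half_cs_n_ge0 : 0 <= cs * nR / 2.
Proof. by rewrite divr_ge0 ?mulr_ge0 ?(ltW cs_gt0). Qed.

Definition potential (t : nat) (c : config n) : R :=
  nR * (1 - del) ^+ (K - t) * opinion_ratio (x1R c) (x2R c)
  + (1 + 4 * lam ^+ 2) ^+ (K - t)
    * bias_potential p (cs * nR / 2) lam (x1R c) (x2R c).

Lemma ratio_weight_ge0 t : 0 <= nR * (1 - del) ^+ t.
Proof.
have := n_ge8; case/andP: del_bounds => _ d1 n8.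
by apply: mulr_ge0; [lra | apply: exprn_ge0; lra].
Qed.

Lemma bias_weight_ge1 t : 1 <= (1 + 4 * lam ^+ 2) ^+ t.
Proof. by apply: exprn_ege1; have := sqr_ge0 lam; lra. Qed.

Lemma ratio_ge0 (c : config n) : 0 <= opinion_ratio (x1R c) (x2R c).
Proof. by rewrite /opinion_ratio divr_ge0. Qed.

Lemma ratio_le_n (c : config n) : opinion_ratio (x1R c) (x2R c) <= nR.
Proof.
have := x1_x2_xu_sum R c; have := ler0n R (x2 c); have := ler0n R (xu c).
have := n_ge8; rewrite /opinion_ratio; have [->|x2_ne0] := eqVneq (x2 c) 0%N.
  by rewrite invr0 mulr0; lra.
have x2_ge1 : 1 <= x2R c by rewrite ler1n lt0n.
rewrite ler_pdivrMr; last by lra.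
by have := ler0n R (x1 c); nra.
Qed.

Lemma potential_ge0 t c : 0 <= potential t c.
Proof.
apply: addr_ge0; first exact: mulr_ge0 (ratio_weight_ge0 _) (ratio_ge0 c).
by apply: mulr_ge0; [have := bias_weight_ge1 (K - t); lra | exact: bias_potential_ge0].
Qed.

Lemma potential_final c : x1 c != 0%N -> 1 <= potential K c.
Proof.
move=> x1_ne0; rewrite /potential subnn !expr0 mulr1 mul1r.
have x1_ge1 : 1 <= x1R c by rewrite ler1n lt0n.
have [x2_0|x2_ne0] := eqVneq (x2 c) 0%N.
  have : 1 <= bias_potential p (cs * nR / 2) lam (x1R c) (x2R c).
    apply: bias_potential_ge1; first by case/andP: lam_bounds.
    by rewrite x2_0 mulr0 sub0r; have := half_cs_n_ge0; lra.
  by have := ratio_ge0 c; have := n_ge8; nra.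
have x2_ge1 : 1 <= x2R c by rewrite ler1n lt0n.
have : 1 <= nR * opinion_ratio (x1R c) (x2R c).
  rewrite /opinion_ratio mulrA ler_pdivlMr; last by lra.
  have := x1_x2_xu_sum R c; have := ler0n R (x1 c); have := ler0n R (xu c); nra.
by have := bias_potential_ge0 p (cs * nR / 2) lam (x1R c) (x2R c); lra.
Qed.

Lemma potential_lt1_bias t c : potential t c < 1 ->
  cs * nR / 2 < (1 - p) * x2R c - x1R c.
Proof.
move=> hW; rewrite ltNge; apply/negP => hD.
have Psi1 : 1 <= bias_potential p (cs * nR / 2) lam (x1R c) (x2R c).
  by apply: bias_potential_ge1; first by case/andP: lam_bounds.
have := mulr_ege1 (bias_weight_ge1 (K - t)) Psi1.
have := mulr_ge0 (ratio_weight_ge0 (K - t)) (ratio_ge0 c).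
by move: hW; rewrite /potential; lra.
Qed.

Lemma potential_step t c : (t < K)%N -> potential t c < 1 ->
  \sum_(c' : config n) usd_kernel p c c' * potential t.+1 c' <= potential t c.
Proof.
move=> tK hW; have hD := potential_lt1_bias hW.
have cnt := x1_x2_xu_sum R c; have := n_ge8 => n8.
have X10 := ler0n R (x1 c); have X20 := ler0n R (x2 c); have U0 := ler0n R (xu c).
set A := nR * (1 - del) ^+ (K - t.+1).
set B := (1 + 4 * lam ^+ 2) ^+ (K - t.+1).
have -> : \sum_(c' : config n) usd_kernel p c c' * potential t.+1 c' =
    step_mean p (fun a b => A * opinion_ratio a b + B * bias_potential p (cs * nR / 2) lam a b)
      (x1R c) (x2R c) (xuR c).
  by rewrite -(usd_kernel_mean p c _ n_gt1).
rewrite step_mean_comb.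
have hratio : step_mean p opinion_ratio (x1R c) (x2R c) (xuR c)
    <= (1 - del) * opinion_ratio (x1R c) (x2R c).
  by rewrite /del -cnt; apply: step_mean_ratio_le; rewrite ?cnt // ratio_drift_margin.
have hbias : step_mean p (bias_potential p (cs * nR / 2) lam) (x1R c) (x2R c) (xuR c)
    <= (1 + 4 * lam ^+ 2) * bias_potential p (cs * nR / 2) lam (x1R c) (x2R c).
  apply: step_mean_bias_potential_le; rewrite ?cnt //; [exact: lam_bounds | lra |].
  by have := half_cs_n_ge0; lra.
apply: le_trans (lerD (ler_wpM2l _ hratio) (ler_wpM2l _ hbias)) _.
- exact: ratio_weight_ge0.
- by have := bias_weight_ge1 (K - t.+1); rewrite /B; lra.
rewrite /A /B /potential -(subnSK tK) !exprS.
by rewrite le_eqVlt; apply/predU1P; left; ring.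
Qed.

Lemma ratio_term_le (c : config n) :
  nR * (1 - del) ^+ K * opinion_ratio (x1R c) (x2R c) <= (2 * nR ^+ 2)^-1.
Proof.
have n8 := n_ge8; have cs0 := cs_gt0; have cs1 := cs_le1.
have /andP [del_lo del1] := del_bounds.
have K0 := ler0n R K.
have pow_le_exp : (1 - del) ^+ K <= expR (- del * KR) by apply: expr1D_le_expR; lra.
have exponent_le : - del * KR <= 1 - 5 * ln nR.
  have delK_ge : cs / (4 * nR) * KR <= del * KR by apply: ler_wpM2r.
  have K_lo : 5 * ln nR - 1 <= cs / (4 * nR) * KR.
    rewrite mulrAC ler_pdivlMr; last by lra.
    by have := K_gt; nra.
  lra.
have expR_exponentE : expR (1 - 5 * ln nR) = expR 1 / nR ^+ 5.
  by rewrite expRB expRM_natl lnK // posrE; lra.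
have pow_le : (1 - del) ^+ K <= expR 1 / nR ^+ 5.
  by rewrite -expR_exponentE; apply: (le_trans pow_le_exp); rewrite ler_expR.
apply: (@le_trans _ _ (nR * (expR 1 / nR ^+ 5) * nR)).
  apply: ler_pM; [|exact: ratio_ge0| |exact: ratio_le_n].
  - by apply: mulr_ge0; [lra | apply: exprn_ge0; lra].
  - by apply: ler_wpM2l => //; lra.
rewrite -subr_ge0.
have -> : (2 * nR ^+ 2)^-1 - nR * (expR 1 / nR ^+ 5) * nR =
    (nR - 2 * expR 1) / (2 * nR ^+ 3) by field; rewrite gt_eqF //; lra.
have := @expR1_le4 R; have := expR_ge0 (1 : R) => e0 e4.
by apply: divr_ge0; [lra | apply: mulr_ge0; [lra | apply: exprn_ge0; lra]].
Qed.

Lemma bias_term_le (c : config n) : cs * nR <= (1 - p) * x2R c - x1R c ->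
  (1 + 4 * lam ^+ 2) ^+ K * bias_potential p (cs * nR / 2) lam (x1R c) (x2R c)
  <= (2 * nR ^+ 2)^-1.
Proof.
move=> hD; have n8 := n_ge8; have cs0 := cs_gt0; have K0 : 0 < KR.
  by have := K_ge; lra.
have /andP [lam0 _] := lam_bounds.
have L0 : 0 <= ln nR by apply: ln_ge0; lra.
have pow_le_exp : (1 + 4 * lam ^+ 2) ^+ K <= expR (4 * lam ^+ 2 * KR).
  by apply: expr1D_le_expR; have := sqr_ge0 lam; lra.
have bias_le : bias_potential p (cs * nR / 2) lam (x1R c) (x2R c)
    <= expR (- (lam * cs * nR / 2)) by rewrite /bias_potential ler_expR; nra.
apply: (le_trans (ler_pM _ (bias_potential_ge0 _ _ _ _ _) pow_le_exp bias_le)).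
  by apply: exprn_ge0; have := sqr_ge0 lam; lra.
rewrite -expRD.
set X := cs ^+ 2 * nR ^+ 2 / (64 * KR).
have -> : 4 * lam ^+ 2 * KR + - (lam * cs * nR / 2) = - X.
  by rewrite /lam /X; field; rewrite gt_eqF.
have ln_2nn_le : ln (2 * nR ^+ 2) <= ln nR *+ 3.
  have n0 : 0 < nR by lra.
  rewrite -lnXn // ler_ln ?posrE ?exprn_gt0 ?mulr_gt0 //.
  by rewrite !exprS expr0 mulr1; nra.
have X_ge : ln nR *+ 3 <= X.
  have lnsq : (60 * 64) * ln nR ^+ 2 <= cs ^+ 3 * nR.
    apply: ln_sqr_le; [exact: exprn_gt0 | lra |].
    by case: (size_threshold_ge cs_gt0) => _ _ h; exact: le_trans h n_large.
  rewrite /X ler_pdivlMr; last by lra.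
  have K_lnn : ln nR * (KR * cs) <= ln nR * (20 * nR * ln nR) by apply/ler_wpM2l/K_le.
  have lnsq_n : nR * ((60 * 64) * ln nR ^+ 2) <= nR * (cs ^+ 3 * nR).
    by apply: ler_wpM2l => //; lra.
  have : 0 <= cs * (cs ^+ 2 * nR ^+ 2 - ln nR *+ 3 * (64 * KR)).
    by rewrite -[ln nR *+ 3]mulr_natl; nra.
  by rewrite pmulr_rge0 // subr_ge0.
have n2 : 0 < 2 * nR ^+ 2 by apply: mulr_gt0; [lra | apply: exprn_gt0; lra].
rewrite expRN lef_pV2 ?posrE ?expR_gt0 // -[leLHS]lnK ?posrE // ler_expR.
exact: le_trans ln_2nn_le X_ge.
Qed.

Lemma potential_init (c : config n) : cs * nR <= (1 - p) * x2R c - x1R c ->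
  potential 0 c <= (nR ^+ 2)^-1.
Proof.
move=> hD; rewrite /potential subn0.
have -> : (nR ^+ 2)^-1 = (2 * nR ^+ 2)^-1 + (2 * nR ^+ 2)^-1.
  by field; rewrite gt_eqF //; have := n_ge8; lra.
exact: lerD (ratio_term_le c) (bias_term_le hD).
Qed.

Lemma hit_x1_zero_prob_ge (c : config n) : cs * nR <= (1 - p) * x2R c - x1R c ->
  1 - (nR ^+ 2)^-1 <= hit_x1_zero_prob p c K.
Proof.
move=> hD; rewrite (hit_x1_zero_probE p n_gt1) lerD2l lerN2.
have := stay_prob_le_supermartingale p_ge0 p_le1 n_gt1 potential_ge0
  (@potential_final) (fun t c tK _ => @potential_step t c tK) c (leqnn K).
by rewrite subnn => /le_trans; apply; exact: potential_init.
Qed.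

End HittingTime.

Theorem lemma14 (R : realType) (p cs : R) :
  0 <= p <= 1 -> 0 < cs ->
  exists n0 : nat, forall n : nat, (n0 <= n)%N ->
  forall (c0 : config n) (K : nat),
    cs * n%:R <= (1 - p) * (x2 c0)%:R - (x1 c0)%:R ->
    (* K = floor (20 c_s^{-1} n log n) *)
    K%:R <= 20 / cs * n%:R * ln (n%:R : R) < K.+1%:R ->
    1 - ((n%:R : R) ^+ 2)^-1 <= hit_x1_zero_prob p c0 K.
Proof.
case/andP=> p_ge0 p_le1 cs_gt0.
have [thr_ge8 _ _] := size_threshold_ge cs_gt0.
have thr_ge0 : 0 <= size_threshold cs by lra.
exists (Num.Def.archi_bound (size_threshold cs)) => n hn c0 K hD hK.
have n_large : size_threshold cs <= n%:R.
  by apply/ltW/(lt_le_trans (archi_boundP thr_ge0)); rewrite ler_nat.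
have cs_le1 : cs <= 1.
  have := x1_x2_xu_sum R c0; have := ler0n R (x1 c0); have := ler0n R (xu c0).
  have := mulr_ge0 p_ge0 (ler0n R (x2 c0)); nra.
exact: hit_x1_zero_prob_ge p_ge0 p_le1 cs_gt0 cs_le1 n_large hK c0 hD.
Qed.
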